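(* Let $Q_{\mathcal A}=\{(\alpha,U_\alpha):\alpha\in\mathcal{A}(M)\text{ extendible}\}$, where $U_\alpha$ is the largest open set with $(\alpha,U_\alpha)\in\mathrm{EX}(M)$. Then the topological boundary $\partial\iota_{Q_{\mathcal A}}(M)$ of $\iota_{Q_{\mathcal A}}(M)$ in $Q_{\mathcal A}(M)$ is in bijective correspondence with the quotient $\mathcal{B}(M)/\!\equiv$, where $\mathcal{B}(M)=\{(\alpha,U,\{p\}):(\alpha,U)\in\mathrm{EX}(M),\ p\in B(\alpha)\cap U\}$ is the set of all boundary points.
   Context: Conventions: $M$ is an $n$-dimensional smooth manifold (Hausdorff, second countable) with maximal $C^\infty$ atlas $\mathcal{A}(M)$; every chart $\alpha$ has open domain $\mathrm{dom}(\alpha)\subset M$ and open range $\mathrm{ran}(\alpha)\subset\mathbb{R}^n$. For $A\subset\mathbb{R}^n$, $\partial A$ is its boundary in $\mathbb{R}^n$; for $A\subset U\subset\mathbb{R}^n$, $\partial_U A$ is the boundary of $A$ relative to $U$. An admissible boundary point of $\alpha$ is a $p\in\partial\,\mathrm{ran}(\alpha)$ such that every sequence $(x_i)\subset\mathrm{dom}(\alpha)$ with $\alpha(x_i)\to p$ has no accumulation point in $M$; $B(\alpha)$ is the set of these. An extension is a pair $(\alpha,U)$, $U\subset\mathbb{R}^n$ open, $\mathrm{ran}(\alpha)\subset U$, $\emptyset\ne\partial_U\mathrm{ran}(\alpha)\subset B(\alpha)$; $\mathrm{EX}(M)$ is the set of extensions; $\alpha$ is extendible if it has an extension, and then there is a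 unique largest such $U$. A boundary set is $(\alpha,U,V)$ with $(\alpha,U)\in\mathrm{EX}(M)$, $V\subset B(\alpha)\cap U$ (a boundary point if $V=\{p\}$). $(\alpha,U,V)$ covers $(\beta,X,Y)$ if for every sequence $(y_i)\subset\mathrm{dom}(\beta)$ with $(\beta(y_i))$ having an accumulation point in $Y$ there is a subsequence $(v_i)\subset\mathrm{dom}(\alpha)$ of $(y_i)$ with $(\alpha(v_i))$ having an accumulation point in $V$; they are equivalent, $\equiv$, if each covers the other. Completion: for $Q\subset\mathrm{EX}(M)$ let $P=\{(\alpha,\mathrm{ran}(\alpha)):\alpha\in\mathcal{A}(M)\}$, $S_Q=P\cup Q$, $N_{(\alpha,U)}=\mathrm{ran}(\alpha)\cup\partial_U\mathrm{ran}(\alpha)$ with subspace topology of $\mathbb{R}^n$, $N_Q=\bigsqcup_{(\alpha,U)\in S_Q}N_{(\alpha,U)}$ with disjoint-union topology. Identify $x\in N_{(\alpha,U)}$ with $y\in N_{(\beta,X)}$ iff either $x\in\mathrm{ran}(\alpha)$, $y\in\mathrm{ran}(\beta)$, $\beta\circ\alpha^{-1}(x)=y$, or $x\in\partial_U\mathrm{ran}(\alpha)$, $y\in\partial_X\mathrm{ran}(\beta)$, $(\alpha,U,\{x\})\equiv(\beta,X,\{y\})$. $Q(M)$ is the quotient space, $q:N_Q\to Q(M)$ the quotient map, and $\iota_Q:M\to Q(M)$, $\iota_Q(x)=q(\alpha(x))$ for any $\alpha\in\mathcal{A}(M)$ with $x\in\mathrm{dom}(\alpha)$. *)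

From HB Require Import structures.
From mathcomp Require Import all_boot all_order all_algebra.
From mathcomp Require Import all_classical all_reals all_analysis.
From Stdlib Require Import Relation_Operators.
Set Implicit Arguments. Unset Strict Implicit. Unset Printing Implicit Defensive.
Import Order.TTheory GRing.Theory Num.Theory.
Import numFieldNormedType.Exports.
Local Open Scope classical_set_scope.
Local Open Scope ring_scope.

Section Manifold.
Variables (R : realType) (n : nat).
Notation Rn := 'rV[R]_n.

Definition ebasis (i : 'I_n) : Rn := \row_(j < n) (i == j)%:R.

Fixpoint pd (l : seq 'I_n) (g : Rn -> Rn) : Rn -> Rn :=
  match l with
  | [::] => g
  | i :: l' => fun x => 'D_(ebasis i) (pd l' g) x
  end.

Definition smooth_on (W : set Rn) (g : Rn -> Rn) : Prop :=
  forall (l : seq 'I_n) (x : Rn), W x ->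
    {for x, continuous (pd l g)} /\
    forall i : 'I_n, derivable (pd l g) x (ebasis i).

(* relative boundary of A in U (subspace topology of U in R^n);
   rbdry setT A is the boundary of A in R^n *)
Definition rbdry (U A : set Rn) : set Rn :=
  [set x | U x /\ forall N, nbhs x N ->
      (N `&` A) !=set0 /\ (N `&` (U `\` A)) !=set0].

Variable M : topologicalType.

(* a chart: (domain, map); the values of the map outside the domain are
   irrelevant *)
Definition chart := (set M * (M -> Rn))%type.
Definition cdom (a : chart) : set M := a.1.
Definition cran (a : chart) : set Rn := a.2 @` a.1.

Definition is_chart (a : chart) : Prop :=
  [/\ open (cdom a), open (cran a), set_inj (cdom a) a.2,
      {within cdom a, continuous a.2} &
      exists g : Rn -> M,
        [/\ {within cran a, continuous g},
            (forall x, cdom a x -> g (a.2 x) = x) &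
            (forall y, cran a y -> a.2 (g y) = y)]].

(* beta o alpha^-1 is C^infinity on alpha(dom alpha /\ dom beta) *)
Definition trans_smooth (a b : chart) : Prop :=
  exists g : Rn -> Rn,
    smooth_on (a.2 @` (cdom a `&` cdom b)) g /\
    (forall x, cdom a x -> cdom b x -> g (a.2 x) = b.2 x).

Definition compatible (a b : chart) : Prop :=
  trans_smooth a b /\ trans_smooth b a.

Definition maximal_smooth_atlas (A : set chart) : Prop :=
  [/\ (forall a, A a -> is_chart a),
      (forall a b, A a -> A b -> compatible a b),
      (forall x : M, exists2 a, A a & cdom a x) &
      (forall c, is_chart c -> (forall a, A a -> compatible a c) -> A c)].

Definition smooth_manifold (A : set chart) : Prop :=
  [/\ hausdorff_space M, @second_countable M & maximal_smooth_atlas A].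

Variable A : set chart.

Definition adm_bdry (a : chart) : set Rn :=
  [set p | rbdry setT (cran a) p /\
     forall x : nat -> M, (forall i, cdom a (x i)) ->
       (fun i => a.2 (x i)) @ \oo --> p ->
       cluster (x @ \oo) = set0].

Definition extension (s : chart * set Rn) : Prop :=
  [/\ A s.1, open s.2, cran s.1 `<=` s.2,
      rbdry s.2 (cran s.1) !=set0 &
      rbdry s.2 (cran s.1) `<=` adm_bdry s.1].

Definition bset := (chart * set Rn * set Rn)%type.

Definition boundary_set (t : bset) : Prop :=
  extension (t.1.1, t.1.2) /\ t.2 `<=` adm_bdry t.1.1 `&` t.1.2.

Definition covers (t t' : bset) : Prop :=
  forall y : nat -> M, (forall i, cdom t'.1.1 (y i)) ->
    (exists2 q, t'.2 q & cluster ((fun i => t'.1.1.2 (y i)) @ \oo) q) ->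
    exists phi : nat -> nat, [/\ (forall i, (phi i < phi i.+1)%N),
      (forall i, cdom t.1.1 (y (phi i))) &
      exists2 p, t.2 p & cluster ((fun i => t.1.1.2 (y (phi i))) @ \oo) p].

Definition bequiv (t t' : bset) : Prop := covers t t' /\ covers t' t.

Definition BM : set bset :=
  [set t | exists a U p, [/\ t = (a, U, [set p]), extension (a, U),
                             adm_bdry a p & U p]].

Definition BM_quot : set (set bset) :=
  [set C | exists2 b, BM b & C = [set t | BM t /\ bequiv t b]].

Definition QA : set (chart * set Rn) :=
  [set s | extension s /\ forall U, extension (s.1, U) -> U `<=` s.2].

Section Completion.
Variable Q : set (chart * set Rn).

Definition SQ : set (chart * set Rn) :=
  [set s | (A s.1 /\ s.2 = cran s.1) \/ Q s].

Definition Nset (s : chart * set Rn) : set Rn :=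
  cran s.1 `|` rbdry s.2 (cran s.1).

(* points of the disjoint union N_Q : (index, point) *)
Definition NQ : set ((chart * set Rn) * Rn) :=
  [set z | SQ z.1 /\ Nset z.1 z.2].

Definition ident (z w : (chart * set Rn) * Rn) : Prop :=
  NQ z /\ NQ w /\
  ((cran z.1.1 z.2 /\ cran w.1.1 w.2 /\
     exists2 x, cdom z.1.1 x & z.1.1.2 x = z.2 /\ w.1.1.2 x = w.2)
   \/
   (rbdry z.1.2 (cran z.1.1) z.2 /\ rbdry w.1.2 (cran w.1.1) w.2 /\
     bequiv (z.1.1, z.1.2, [set z.2]) (w.1.1, w.1.2, [set w.2]))).

Definition qeq := clos_refl_sym_trans _ ident.

Definition qclass (z : (chart * set Rn) * Rn) := [set w | qeq z w].

Definition QMpts : set (set ((chart * set Rn) * Rn)) :=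
  [set C | exists2 z, NQ z & C = qclass z].

(* open sets of the quotient topology: q^-1(O) is open in N_Q, i.e. its
   trace on each summand N_s is relatively open *)
Definition Qopen (O : set (set ((chart * set Rn) * Rn))) : Prop :=
  O `<=` QMpts /\
  forall s, SQ s -> exists2 W : set Rn, open W &
    [set x | Nset s x /\ O (qclass (s, x))] = W `&` Nset s.

Definition iotaM : set (set ((chart * set Rn) * Rn)) :=
  [set C | exists a x, [/\ A a, cdom a x & C = qclass ((a, cran a), a.2 x)]].

Definition bdry_iotaM : set (set ((chart * set Rn) * Rn)) :=
  [set C | QMpts C /\ forall O, Qopen O -> O C ->
     (O `&` iotaM) !=set0 /\ (O `&` (QMpts `\` iotaM)) !=set0].

End Completion.
End Manifold.

From HB Require Import structures.
From mathcomp Require Import all_boot all_order all_algebra.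
From mathcomp Require Import all_classical all_reals all_analysis.
From Stdlib Require Import Relation_Operators.
Import numFieldNormedType.Exports.
Set Implicit Arguments.
Local Open Scope classical_set_scope.

(* Ranges of charts are open, so a point of N_Q either lies in the range of
   its chart or is a relative boundary point of it, and the identification
   never mixes the two kinds.  Hence iota(M) is open in Q(M), the boundary of
   iota(M) consists exactly of the classes of boundary points, and on those
   classes the identification is the equivalence of boundary points.  Every
   boundary point (alpha, U, {p}) is equivalent to (alpha, U_alpha, {p}) with
   U_alpha the union of all extension domains of alpha, which lies in
   Q_A(M). *)

Section RelativeBoundary.
Variables (R : realType) (n : nat).

Lemma rbdry_notin (U X : set 'rV[R]_n) x : open X -> rbdry U X x -> ~ X x.
Proof.
move=> oX [_ bx] Xx.
have [_ [y [Xy [_ nXy]]]] := bx X (open_nbhs_nbhs (conj oX Xx)).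
exact: nXy.
Qed.

Lemma rbdry_restrict {U V X : set 'rV[R]_n} {x} :
  open X -> rbdry U X x -> V x -> rbdry V X x.
Proof.
move=> oX bx Vx; have nXx := rbdry_notin oX bx.
split=> // N Nx; split; first exact: (bx.2 N Nx).1.
by exists x; split; [exact: nbhs_singleton Nx|].
Qed.

End RelativeBoundary.

Section BoundaryEquivalence.
Variables (R : realType) (n : nat) (M : topologicalType).
Implicit Types t : bset R n M.

Lemma covers_refl t : covers t t.
Proof. by move=> y y_dom [q qV cq]; exists id; split=> //; exists q. Qed.

Lemma covers_trans t1 t2 t3 : covers t1 t2 -> covers t2 t3 -> covers t1 t3.
Proof.
move=> c12 c23 y y_dom y_cl.
have [phi [phi_lt phi_dom phi_cl]] := c23 y y_dom y_cl.
have [psi [psi_lt psi_dom psi_cl]] := c12 (y \o phi) phi_dom phi_cl.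
exists (phi \o psi); split=> // i.
exact: (homo_ltn ltn_trans phi_lt).
Qed.

Lemma bequiv_refl t : bequiv t t.
Proof. by split; apply: covers_refl. Qed.

Lemma bequiv_sym t t' : bequiv t t' -> bequiv t' t.
Proof. by case. Qed.

Lemma bequiv_trans t1 t2 t3 : bequiv t1 t2 -> bequiv t2 t3 -> bequiv t1 t3.
Proof. by move=> [c12 c21] [c23 c32]; split; apply: covers_trans; eassumption. Qed.

End BoundaryEquivalence.

Definition bpoint (R : realType) (n : nat) (M : topologicalType)
  (z : (chart R n M * set 'rV[R]_n) * 'rV[R]_n) : bset R n M :=
  (z.1.1, z.1.2, [set z.2]).

Definition bclass (R : realType) (n : nat) (M : topologicalType)
  (A : set (chart R n M)) (C : set ((chart R n M * set 'rV[R]_n) * 'rV[R]_n)) :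
  set (bset R n M) :=
  [set t | BM A t /\ exists2 z, C z & bequiv t (bpoint z)].

Section Completion.
Variables (R : realType) (n : nat) (M : topologicalType).
Variables (A : set (chart R n M)) (Q : set (chart R n M * set 'rV[R]_n)).
Hypothesis cran_open : forall a, A a -> open (cran a).
Hypothesis Q_extension : Q `<=` extension A.

Local Notation point := ((chart R n M * set 'rV[R]_n) * 'rV[R]_n)%type.
Local Notation NQ := (NQ A Q).
Local Notation qeq := (qeq A Q).
Local Notation qclass := (qclass A Q).
Local Notation iotaM := (iotaM A Q).
Implicit Types z w : point.

(* An equivalence containing [ident], hence [qeq]. *)
Definition kind_equiv z w :=
  (cran z.1.1 z.2 <-> cran w.1.1 w.2) /\
  (~ cran z.1.1 z.2 -> bequiv (bpoint z) (bpoint w)).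

Lemma SQ_chart s : SQ A Q s -> A s.1.
Proof. by case=> [[]|/Q_extension[]]. Qed.

Lemma NQ_rbdry z : NQ z -> ~ cran z.1.1 z.2 -> rbdry z.1.2 (cran z.1.1) z.2.
Proof. by case=> _ [zr /(_ zr)|]. Qed.

Lemma ident_kind_equiv z w : ident A Q z w -> kind_equiv z w.
Proof.
move=> [[Sz _] [[Sw _] [[zr [wr _]] | [zb [wb zw]]]]]; first by split.
have nzr := rbdry_notin (cran_open (SQ_chart Sz)) zb.
have nwr := rbdry_notin (cran_open (SQ_chart Sw)) wb.
by split.
Qed.

Lemma qeq_kind_equiv z w : qeq z w -> kind_equiv z w.
Proof.
elim=> {z w} [z w /ident_kind_equiv //|z|z w _ [rzw bzw]|z w v _ [rzw bzw] _ [rwv bwv]].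
- by split=> // _; apply: bequiv_refl.
- split=> [|nwr]; first tauto.
  by apply/bequiv_sym/bzw; rewrite rzw.
- split=> [|nzr]; first tauto.
  by apply: bequiv_trans (bzw nzr) (bwv _); rewrite -rzw.
Qed.

Lemma eq_qclass z w : qclass z = qclass w <-> qeq z w.
Proof.
split=> zw; first by have : qclass w w := rst_refl _ _ _; rewrite -zw.
by apply/seteqP; split=> v; [apply: rst_trans; apply: rst_sym|apply: rst_trans].
Qed.

Lemma iotaM_qclass z : NQ z -> iotaM (qclass z) <-> cran z.1.1 z.2.
Proof.
move=> [Sz Nz]; split=> [[a [x [Aa ax /eq_qclass /qeq_kind_equiv [rza _]]]]|zr].
  by apply/rza; exists x.
have [x ax xz] := zr.
exists z.1.1, x; split=> //; first exact: SQ_chart.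
apply/eq_qclass/rst_step; split=> //; split.
  by split; [left; split=> //; exact: SQ_chart Sz|left; exists x].
by left; do 2!split=> //; exists x.
Qed.

Lemma Qopen_iotaM : Qopen A Q iotaM.
Proof.
split=> [_ [a [x [Aa ax ->]]]|s Ss].
  exists ((a, cran a), a.2 x); last by [].
  by split; [left|left; exists x].
exists (cran s.1); first exact/cran_open/SQ_chart.
apply/seteqP; split=> x /=.
- by move=> [Nx /(iotaM_qclass (z := (s, x)) (conj Ss Nx))].
- by move=> [xr Nx]; split; last exact/(iotaM_qclass (z := (s, x))).
Qed.

Lemma bdry_iotaM_qclass z : NQ z ->
  bdry_iotaM A Q (qclass z) <-> ~ cran z.1.1 z.2.
Proof.
move=> Nz; split=> [[_ bz] zr|nzr].
  have [_ [C [iC [_ niC]]]] := bz _ Qopen_iotaM ((iotaM_qclass Nz).2 zr).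
  exact: niC iC.
split=> [|O [_ openO] Oz]; first by exists z.
case: z Nz nzr Oz => s p [Ss [//|pb]] nzr Oz.
have [W oW OW] := openO s Ss.
have Wp : W p by have [] : (W `&` Nset s) p by rewrite -OW; split=> //; right.
have [[x [Wx xr]] _] := pb.2 W (open_nbhs_nbhs (conj oW Wp)).
have [_ Ox] : [set x | Nset s x /\ O (qclass (s, x))] x.
  by rewrite OW; split=> //; left.
have Nx : NQ (s, x) by split=> //; left.
have Np : NQ (s, p) by split=> //; right.
split; first by exists (qclass (s, x)); split; last exact: (iotaM_qclass Nx).2.
exists (qclass (s, p)); split=> //; split; first by exists (s, p).
by move/(iotaM_qclass Np).
Qed.

Lemma bdry_iotaMP C : bdry_iotaM A Q C ->
  exists z, [/\ C = qclass z, NQ z & ~ cran z.1.1 z.2].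
Proof.
move=> bC; have [[z Nz eC] _] := bC.
by exists z; split=> //; apply/(bdry_iotaM_qclass Nz); rewrite -eC.
Qed.

Lemma BM_bpoint z : NQ z -> ~ cran z.1.1 z.2 -> BM A (bpoint z).
Proof.
move=> Nz nzr; have zb := NQ_rbdry Nz nzr.
case: z Nz nzr zb => [[a U] p] [[[_ /= EU]|/Q_extension ext] _] nzr zb.
  by case: nzr; rewrite -EU; exact: zb.1.
exists a, U, p; split=> //; [by case: ext => _ _ _ _; apply|exact: zb.1].
Qed.

Lemma bclass_qclass z : ~ cran z.1.1 z.2 ->
  bclass A (qclass z) = [set t | BM A t /\ bequiv t (bpoint z)].
Proof.
move=> nzr; apply/seteqP; split=> t /= [Bt bt]; split=> //.
  have [w /qeq_kind_equiv [_ zw] tw] := bt.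
  exact: bequiv_trans tw (bequiv_sym (zw nzr)).
by exists z => //; apply: rst_refl.
Qed.

Lemma bclass_bdry_iotaM C : bdry_iotaM A Q C -> BM_quot A (bclass A C).
Proof.
move=> /bdry_iotaMP [z [-> Nz nzr]].
by exists (bpoint z); [exact: BM_bpoint|rewrite bclass_qclass].
Qed.

Lemma bclass_inj : set_inj (bdry_iotaM A Q) (bclass A).
Proof.
move=> C1 C2 /set_mem /bdry_iotaMP [z [-> Nz nzr]] /set_mem /bdry_iotaMP [w [-> Nw nwr]].
rewrite !bclass_qclass // => ezw.
have [_ zw] : [set t | BM A t /\ bequiv t (bpoint w)] (bpoint z).
  by rewrite -ezw; split; [exact: BM_bpoint|exact: bequiv_refl].
apply/eq_qclass/rst_step; split=> //; split=> //; right.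
by split; [exact: NQ_rbdry|split; first exact: NQ_rbdry].
Qed.

End Completion.

Section MaximalExtension.
Variables (R : realType) (n : nat) (M : topologicalType) (A : set (chart R n M)).
Hypothesis cran_open : forall a, A a -> open (cran a).

Lemma QA_extension : QA A `<=` extension A.
Proof. by move=> s []. Qed.

Lemma extension_QA a U : extension A (a, U) ->
  exists2 U', QA A (a, U') & U `<=` U'.
Proof.
move=> ext; have [Aa _ _ _ _] := ext; have oa := cran_open Aa.
pose U' := \bigcup_(V in [set V | extension A (a, V)]) V.
have bdryU' x : rbdry U' (cran a) x ->
    exists2 V, extension A (a, V) & rbdry V (cran a) x.
  by move=> xb; have [[V eV Vx] _] := xb; exists V => //; exact: rbdry_restrict oa xb Vx.
exists U'; last by move=> x Ux; exists U.
split=> [|V eV x Vx]; last by exists V.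
have [_ _ aU [x xb] adm] := ext.
split=> //=.
- by apply: bigcup_open => V [].
- by move=> y ay; exists U => //; apply: aU.
- by exists x; apply: rbdry_restrict oa (adm x xb).1 _; exists U => //; case: xb.
- by move=> y /bdryU' [V [_ _ _ _ admV] /admV].
Qed.

Lemma bclass_surj : set_surj (bdry_iotaM A (QA A)) (BM_quot A) (bclass A).
Proof.
move=> _ [_ [a [U [p [-> ext adm Up]]]] ->].
have [U' QU' UU'] := extension_QA ext.
have [Aa _ _ _ _] := ext.
have pb : rbdry U' (cran a) p := rbdry_restrict (cran_open Aa) adm.1 (UU' p Up).
have nar : ~ cran a p := rbdry_notin (cran_open Aa) pb.
have Nz : NQ A (QA A) ((a, U'), p) by split; [right|right].
exists (qclass A (QA A) ((a, U'), p)).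
  exact/(bdry_iotaM_qclass cran_open QA_extension Nz).
(* [covers] ignores the extension domain, so (a, U', {p}) may stand for (a, U, {p}). *)
by rewrite (bclass_qclass cran_open QA_extension).
Qed.

End MaximalExtension.

Theorem mainTheorem7 (R : realType) (n : nat) (M : topologicalType)
    (A : set (chart R n M)) :
  smooth_manifold A ->
  exists f : set ((chart R n M * set 'rV[R]_n) * 'rV[R]_n) -> set (bset R n M),
    set_bij (bdry_iotaM A (QA A)) (BM_quot A) f.
Proof.
move=> [_ _ [charts _ _ _]].
have cran_open a : A a -> open (cran a) by case/charts.
exists (bclass A); split.
- exact: bclass_bdry_iotaM cran_open (QA_extension (A := A)).
- exact: bclass_inj cran_open (QA_extension (A := A)).
- exact: bclass_surj.
Qed.
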